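(* Let $F:\widehat{\gamma}_{\mathrm{par}}\to\widehat{\gamma}_{\mathrm{vir}}$ and $H:\widehat{\gamma}_{\mathrm{vir}}\to\widehat{\gamma}_{\mathrm{par}}$ be the saddle morphisms $F=\mathrm{id}_{K_{\mathrm{cmn}}}\otimes(R\otimes_{R_{\mathrm p}}F_{\mathrm p})$, $H=\mathrm{id}_{K_{\mathrm{cmn}}}\otimes(R\otimes_{R_{\mathrm p}}H_{\mathrm p})$, where $F_{\mathrm p}:\widehat{\gamma}_{\mathrm{par,p}}\to\widehat{\gamma}_{\mathrm{vir,p}}$ and $H_{\mathrm p}:\widehat{\gamma}_{\mathrm{vir,p}}\to\widehat{\gamma}_{\mathrm{par,p}}$ are both given on the even part by $\begin{pmatrix}0&1\\ q_2^2-q_1^2C&0\end{pmatrix}$ and on the odd part by $\begin{pmatrix}q_2&-q_1\\ q_1C&-q_2\end{pmatrix}$. Then, as endomorphisms of $\widehat{\gamma}_{\mathrm{par}}$, \[ H\circ F\simeq 2\,\hat y_1\hat y_2-2(2N+1)\sum_{i=0}^{2N}\hat x_1^{\,i}\,\hat x_2^{\,2N-i}, \] where $\hat x_k,\hat y_k$ denote multiplication by $x_k,y_k$ and $\simeq$ denotes homotopy.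
   Context: Fix $N\ge1$, $w(x)=x^{2N+1}$, $W(x,y)=xy^2+x^{2N+1}$, iterated divided differences $w(x_1,\dots,x_n)=\frac{w(x_1,\dots,x_{n-2},x_{n-1})-w(x_1,\dots,x_{n-2},x_n)}{x_{n-1}-x_n}$. $R=\mathbb{Q}[x_1,\dots,x_4,y_1,\dots,y_4]$, $\deg x_i=2$, $\deg y_i=2N$; $W_4=\sum W(x_i,y_i)$. Matrix factorizations of $V$: $\mathbb{Z}/2$-graded free modules with odd $D$, $D^2=V$; two morphisms are homotopic if their difference is $DX+XD$ for an odd $X$. $A(i,j)$ is the Koszul matrix factorization (tensor product over $R$ of $Re_0\oplus Re_1$, $De_0=b e_1$, $De_1=a e_0$ for each row $(a\mid b)$) with rows $(y_j+y_i\mid x_j(y_j-y_i))$, $(x_j+x_i\mid y_i^2+w(-x_i,x_j))$; $\widehat{\gamma}_{\mathrm{par}}=A(1,3)\otimes A(2,4)$, $\widehat{\gamma}_{\mathrm{vir}}=A(1,4)\otimes A(2,3)$. $R_{\mathrm p}=\mathbb{Q}[p_1,p_2,q_1,q_2,r_1,r_2,C]$, $W_{4,\mathrm p}=p_1q_2r_2+q_1p_2r_2+r_1p_2q_2+p_1q_1r_1C$. $\widehat{\gamma}_{\mathrm{par,p}}$: $R_{\mathrm p}^2$ (odd) $\xrightarrow{P}$ $R_{\mathrm p}^2$ (even) $\xrightarrow{Q}$ $R_{\mathrm p}^2$ (odd) with $P=\begin{pmatrix}p_2&p_1\\ q_2r_2+q_1r_1C&-(q_2r_1+q_1r_2)\end{pmatrix}$,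 $Q=\begin{pmatrix}q_1r_2+q_2r_1&p_1\\ q_2r_2+q_1r_1C&-p_2\end{pmatrix}$; $\widehat{\gamma}_{\mathrm{vir,p}}$: same shape with $P=\begin{pmatrix}r_2&r_1\\ p_2q_2+p_1q_1C&-(p_1q_2+p_2q_1)\end{pmatrix}$, $Q=\begin{pmatrix}p_1q_2+p_2q_1&r_1\\ p_2q_2+p_1q_1C&-r_2\end{pmatrix}$. $\phi_{\mathrm p}:R_{\mathrm p}\to R$: $p_1\mapsto x_2+x_4$, $q_1\mapsto x_3+x_4$, $r_1\mapsto x_1+x_4$, $p_2\mapsto y_2+y_4$, $q_2\mapsto y_3+y_4$, $r_2\mapsto y_1+y_4$, $C\mapsto w(x_1,x_2,-x_3,x_4)+w(x_1,-x_1,x_2,x_4)+w(x_1,-x_1,-x_2,x_4)$; $R\otimes_{R_{\mathrm p}}$ denotes base change along $\phi_{\mathrm p}$. $K_{\mathrm{cmn}}$ is the Koszul matrix factorization with rows $(x_1+x_2+x_3+x_4\mid A)$, $(y_1+y_2+y_3+y_4\mid B)$, $A=-(y_3+y_4)(y_1+y_2+y_4)-y_1y_2+w(-x_1,x_3)+(x_2+x_4)w(x_1,x_2,-x_3)-(x_2+x_4)(x_1+x_4)(w(x_1,-x_1,x_2,x_4)+w(x_1,-x_1,-x_2,x_4))$, $B=x_1y_1+x_2y_2+x_3y_3-x_4y_4$; $K_{\mathrm{cmn}}\otimes_R(R\otimes_{R_{\mathrm p}}\widehat{\gamma}_{\mathrm{par,p}})\cong\widehat{\gamma}_{\mathrm{par}}$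 and similarly for vir, and $F,H$ are regarded as morphisms between $\widehat{\gamma}_{\mathrm{par}}$ and $\widehat{\gamma}_{\mathrm{vir}}$ via these isomorphisms. *)

From HB Require Import structures.
From mathcomp Require Import all_boot all_order all_algebra.
From mathcomp Require Import mpoly.
Set Implicit Arguments.
Unset Strict Implicit.
Unset Printing Implicit Defensive.
Import GRing.Theory.
Local Open Scope ring_scope.

(* A module is given by finite index types of an even basis and an    *)
(* odd basis; a map is a matrix acting on column vectors:             *)
(* (m : J -> I -> T) sends basis vector i to \sum_j m j i * e_j.      *)
Section MF.
Variable T : comNzRingType.

Unset Implicit Arguments.
Record mf := MF {
  mf_ev : finType;
  mf_od : finType;
  mf_dE : mf_od -> mf_ev -> T;
  mf_dO : mf_ev -> mf_od -> T
}.
Arguments MF {mf_ev mf_od}.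
Set Implicit Arguments.


Definition mcomp (I J K : finType) (g : K -> J -> T) (f : J -> I -> T) : K -> I -> T :=
  fun k i => \sum_(j : J) g k j * f j i.

Record mor (M M' : mf) := Mor {
  morE : mf_ev M' -> mf_ev M -> T;
  morO : mf_od M' -> mf_od M -> T
}.

Definition mor_comp (M M' M'' : mf) (g : mor M' M'') (f : mor M M') : mor M M'' :=
  Mor (mcomp (morE g) (morE f)) (mcomp (morO g) (morO f)).

Definition mor_scal (M : mf) (c : T) : mor M M :=
  Mor (fun j i => if j == i then c else 0) (fun j i => if j == i then c else 0).

Definition homotopic (M M' : mf) (f g : mor M M') : Prop :=
  exists (X0 : mf_od M' -> mf_ev M -> T) (X1 : mf_ev M' -> mf_od M -> T),
    (forall j i, morE f j i - morE g j i
                 = mcomp (mf_dO M') X0 j i + mcomp X1 (mf_dE M) j i) /\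
    (forall j i, morO f j i - morO g j i
                 = mcomp (mf_dE M') X1 j i + mcomp X0 (mf_dO M) j i).

(* Tensor product (Koszul sign rule D(u(x)v) = Du(x)v + (-1)^|u| u(x)Dv). *)
Definition tens_ev (M N : mf) : finType :=
  ((mf_ev M * mf_ev N) + (mf_od M * mf_od N))%type.
Definition tens_od (M N : mf) : finType :=
  ((mf_ev M * mf_od N) + (mf_od M * mf_ev N))%type.

Definition ind (I : finType) (a b : I) : T := if a == b then 1 else 0.

Definition tens_dE (M N : mf) : tens_od M N -> tens_ev M N -> T :=
  fun t s => match t, s with
  | inl (a0, b1), inl (i0, j0) => ind a0 i0 * mf_dE N b1 j0
  | inl (a0, b1), inr (i1, j1) => mf_dO M a0 i1 * ind b1 j1
  | inr (a1, b0), inl (i0, j0) => mf_dE M a1 i0 * ind b0 j0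
  | inr (a1, b0), inr (i1, j1) => - (ind a1 i1 * mf_dO N b0 j1)
  end.

Definition tens_dO (M N : mf) : tens_ev M N -> tens_od M N -> T :=
  fun t s => match t, s with
  | inl (a0, b0), inl (i0, j1) => ind a0 i0 * mf_dO N b0 j1
  | inl (a0, b0), inr (i1, j0) => mf_dO M a0 i1 * ind b0 j0
  | inr (a1, b1), inl (i0, j1) => mf_dE M a1 i0 * ind b1 j1
  | inr (a1, b1), inr (i1, j0) => - (ind a1 i1 * mf_dE N b1 j0)
  end.

Definition tens (M N : mf) : mf := MF (@tens_dE M N) (@tens_dO M N).

Definition id_tens (M N N' : mf) (f : mor N N') : mor (tens M N) (tens M N') :=
  @Mor (tens M N) (tens M N') (fun (t : tens_ev M N') (s : tens_ev M N) => match t, s with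
       | inl (a, b), inl (i, j) => ind a i * morE f b j
       | inr (a, b), inr (i, j) => ind a i * morO f b j
       | _, _ => 0 end)
      (fun (t : tens_od M N') (s : tens_od M N) => match t, s with
       | inl (a, b), inl (i, j) => ind a i * morO f b j
       | inr (a, b), inr (i, j) => ind a i * morE f b j
       | _, _ => 0 end).

(* Koszul factorization of a single row (a | b): Re0 (even) + Re1 (odd),
   D e0 = b e1, D e1 = a e0 *)
Definition koszul1 (a b : T) : mf :=
  @MF unit unit (fun _ _ => b) (fun _ _ => a).

Definition m22 (a b c d : T) : 'I_2 -> 'I_2 -> T :=
  fun i j => if i == 0 :> nat then (if j == 0 :> nat then a else b)
             else (if j == 0 :> nat then c else d).

(* R_p^2 (odd) --P--> R_p^2 (even) --Q--> R_p^2 (odd) *)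
Definition mf22 (P Q : 'I_2 -> 'I_2 -> T) : mf := @MF 'I_2 'I_2 Q P.

End MF.
Arguments mf_ev {T}.
Arguments mf_od {T}.
Arguments mf_dE {T}.
Arguments mf_dO {T}.

Definition base_change (S T : comNzRingType) (phi : S -> T) (M : mf S) : mf T :=
  @MF T (mf_ev M) (mf_od M) (fun j i => phi (mf_dE M j i)) (fun j i => phi (mf_dO M j i)).

Definition mor_base_change (S T : comNzRingType) (phi : S -> T) (M M' : mf S)
  (f : mor M M') : mor (base_change phi M) (base_change phi M') :=
  @Mor T (base_change phi M) (base_change phi M')
       (fun j i => phi (morE f j i)) (fun j i => phi (morO f j i)).

Definition R := {mpoly rat[8]}.
Definition xv (k : nat) : R := 'X_(inord (k.-1)).
Definition yv (k : nat) : R := 'X_(inord (k + 3)).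

Definition Rp := {mpoly rat[7]}.
Definition p1 : Rp := 'X_(inord 0).
Definition p2 : Rp := 'X_(inord 1).
Definition q1 : Rp := 'X_(inord 2).
Definition q2 : Rp := 'X_(inord 3).
Definition r1 : Rp := 'X_(inord 4).
Definition r2 : Rp := 'X_(inord 5).
Definition Cp : Rp := 'X_(inord 6).

(* Iterated divided differences of w(x) = x^(2N+1).                    *)
(* wpoly N [x1;...;xk] is t |-> w(x1,...,xk,t), and                    *)
(* w N [x1;...;xn] = w(x1,...,xn).                                     *)
Definition ddiff (a : R) (p : {poly R}) : {poly R} :=
  (p - (p.[a])%:P) %/ ('X - a%:P).

Fixpoint wpoly_rev (N : nat) (xs : seq R) : {poly R} :=
  match xs with
  | [::] => 'X ^+ (2 * N + 1)
  | a :: xs' => ddiff a (wpoly_rev N xs')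
  end.

(* w(x1,...,xn) for n >= 1 *)
Definition w (N : nat) (xs : seq R) : R :=
  (wpoly_rev N (rev (take (size xs).-1 xs))).[last 0 xs].

Definition gamma_par_p : mf Rp :=
  mf22 (m22 p2 p1 (q2 * r2 + q1 * r1 * Cp) (- (q2 * r1 + q1 * r2)))
       (m22 (q1 * r2 + q2 * r1) p1 (q2 * r2 + q1 * r1 * Cp) (- p2)).

Definition gamma_vir_p : mf Rp :=
  mf22 (m22 r2 r1 (p2 * q2 + p1 * q1 * Cp) (- (p1 * q2 + p2 * q1)))
       (m22 (p1 * q2 + p2 * q1) r1 (p2 * q2 + p1 * q1 * Cp) (- r2)).

Definition saddleE : 'I_2 -> 'I_2 -> Rp := m22 0 1 (q2 ^+ 2 - q1 ^+ 2 * Cp) 0.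
Definition saddleO : 'I_2 -> 'I_2 -> Rp := m22 q2 (- q1) (q1 * Cp) (- q2).

Definition F_p : mor gamma_par_p gamma_vir_p := @Mor _ gamma_par_p gamma_vir_p saddleE saddleO.
Definition H_p : mor gamma_vir_p gamma_par_p := @Mor _ gamma_vir_p gamma_par_p saddleE saddleO.

Definition phi_vals (N : nat) (i : 'I_7) : R :=
  match val i with
  | 0 => xv 2 + xv 4
  | 1 => yv 2 + yv 4
  | 2 => xv 3 + xv 4
  | 3 => yv 3 + yv 4
  | 4 => xv 1 + xv 4
  | 5 => yv 1 + yv 4
  | _ => w N [:: xv 1; xv 2; - xv 3; xv 4] + w N [:: xv 1; - xv 1; xv 2; xv 4]
         + w N [:: xv 1; - xv 1; - xv 2; xv 4]
  end.

Definition phi_p (N : nat) (p : Rp) : R := mmap (fun c => c%:MP_[8]) (phi_vals N) p.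

Definition A_cmn (N : nat) : R :=
  - (yv 3 + yv 4) * (yv 1 + yv 2 + yv 4) - yv 1 * yv 2 + w N [:: - xv 1; xv 3]
  + (xv 2 + xv 4) * w N [:: xv 1; xv 2; - xv 3]
  - (xv 2 + xv 4) * (xv 1 + xv 4)
    * (w N [:: xv 1; - xv 1; xv 2; xv 4] + w N [:: xv 1; - xv 1; - xv 2; xv 4]).

Definition B_cmn : R := xv 1 * yv 1 + xv 2 * yv 2 + xv 3 * yv 3 - xv 4 * yv 4.

Definition K_cmn (N : nat) : mf R :=
  tens (koszul1 (xv 1 + xv 2 + xv 3 + xv 4) (A_cmn N))
       (koszul1 (yv 1 + yv 2 + yv 3 + yv 4) B_cmn).

Definition gamma_par (N : nat) : mf R := tens (K_cmn N) (base_change (phi_p N) gamma_par_p).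
Definition gamma_vir (N : nat) : mf R := tens (K_cmn N) (base_change (phi_p N) gamma_vir_p).

Definition F_saddle (N : nat) : mor (gamma_par N) (gamma_vir N) :=
  id_tens (K_cmn N) (mor_base_change (phi_p N) F_p).
Definition H_saddle (N : nat) : mor (gamma_vir N) (gamma_par N) :=
  id_tens (K_cmn N) (mor_base_change (phi_p N) H_p).

(* Both saddle maps are [id (x) (base change of a 2x2 matrix)], and their
   composite is multiplication by c = phi(q2^2 - q1^2 C) on gamma_par.  The scalars
   acting null-homotopically on gamma_par form an ideal J; it contains the Koszul
   entries x1+x2+x3+x4, y1+y2+y3+y4, A of K_cmn and the images of p1, p2 and
   q2 r2 + q1 r1 C, which act null-homotopically on gamma_par_p.  Modulo J we thus
   have x3 = -x1, x4 = -x2, y3 = -y1, y4 = -y2, so every polynomial is congruent to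
   its image under the substitution sigma doing this.  Finally, with t the claimed
   scalar, sigma(c - t) = sigma(2 A + phi(q2 r2 + q1 r1 C)) by an identity between
   divided differences of x^(2N+1) at +-x1, +-x2, checked in the field of
   fractions. *)

From HB Require Import structures.
From mathcomp Require Import all_boot all_order all_algebra.
From mathcomp Require Import mpoly ring.

Import GRing.Theory.
Local Open Scope ring_scope.
Set Implicit Arguments.
Unset Strict Implicit.
Unset Printing Implicit Defensive.

Section NullHomotopy.
Variable T : comNzRingType.

Definition scalmx (I : finType) (c : T) : I -> I -> T :=
  fun j i => if j == i then c else 0.

Lemma scalmxD (I : finType) c d (j i : I) : scalmx (c + d) j i = scalmx c j i + scalmx d j i.
Proof. by rewrite /scalmx; case: (j == i); rewrite ?addr0. Qed.

Lemma scalmxMl (I : finType) r c (j i : I) : scalmx (r * c) j i = r * scalmx c j i.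
Proof. by rewrite /scalmx; case: (j == i); rewrite ?mulr0. Qed.

Lemma scalmx_pair (I J : finType) c (a i : I) (b j : J) :
  scalmx c (a, b) (i, j) = scalmx c a i * ind T b j.
Proof.
by rewrite /scalmx /ind xpair_eqE; case: (a == i); case: (b == j); rewrite /= ?mulr1 ?mulr0 ?mul0r.
Qed.

Lemma scalmx_pair_ind (I J : finType) c (a i : I) (b j : J) :
  scalmx c (a, b) (i, j) = ind T a i * scalmx c b j.
Proof.
by rewrite /scalmx /ind xpair_eqE; case: (a == i); case: (b == j); rewrite /= ?mul1r ?mulr0 ?mul0r.
Qed.

Lemma scalmx_inl (I J : finType) c (x y : I) : scalmx c (inl x : I + J) (inl y) = scalmx c x y.
Proof. by []. Qed.

Lemma scalmx_inr (I J : finType) c (x y : J) : scalmx c (inr x : I + J) (inr y) = scalmx c x y.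
Proof. by []. Qed.

Lemma scalmx_inlr (I J : finType) c (x : I) (y : J) : scalmx c (inl x) (inr y) = 0.
Proof. by []. Qed.

Lemma scalmx_inrl (I J : finType) c (x : J) (y : I) : scalmx c (inr x) (inl y) = 0.
Proof. by []. Qed.

Lemma mcompDr (I J K : finType) (g : K -> J -> T) (f f' : J -> I -> T) k i :
  mcomp g (fun j i => f j i + f' j i) k i = mcomp g f k i + mcomp g f' k i.
Proof. by rewrite /mcomp -big_split; apply: eq_bigr => j _; rewrite mulrDr. Qed.

Lemma mcompDl (I J K : finType) (g g' : K -> J -> T) (f : J -> I -> T) k i :
  mcomp (fun k j => g k j + g' k j) f k i = mcomp g f k i + mcomp g' f k i.
Proof. by rewrite /mcomp -big_split; apply: eq_bigr => j _; rewrite mulrDl. Qed.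

Lemma mcompMr (I J K : finType) r (g : K -> J -> T) (f : J -> I -> T) k i :
  mcomp g (fun j i => r * f j i) k i = r * mcomp g f k i.
Proof. by rewrite /mcomp mulr_sumr; apply: eq_bigr => j _; rewrite mulrCA. Qed.

Lemma mcompMl (I J K : finType) r (g : K -> J -> T) (f : J -> I -> T) k i :
  mcomp (fun k j => r * g k j) f k i = r * mcomp g f k i.
Proof. by rewrite /mcomp mulr_sumr; apply: eq_bigr => j _; rewrite mulrA. Qed.

Lemma mcomp_indl (I J : finType) (A : I -> J -> T) k i : mcomp (@ind T I) A k i = A k i.
Proof.
rewrite /mcomp (bigD1 k) //= big1 => [|j /negbTE nkj]; last by rewrite /ind eq_sym nkj mul0r.
by rewrite /ind eqxx mul1r addr0.
Qed.

Lemma mcomp_indr (I J : finType) (A : J -> I -> T) k i : mcomp A (@ind T I) k i = A k i.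
Proof.
rewrite /mcomp (bigD1 i) //= big1 => [|j /negbTE nji]; last by rewrite /ind nji mulr0.
by rewrite /ind eqxx mulr1 addr0.
Qed.

Lemma sum_unit (F : unit -> T) : \sum_(i : unit) F i = F tt.
Proof. by rewrite (big_pred1 tt) // => -[]. Qed.

Lemma sum_pair (I J : finType) (F : I * J -> T) :
  \sum_(p : I * J) F p = \sum_i \sum_j F (i, j).
Proof. by rewrite pair_bigA; apply: eq_bigr => -[]. Qed.

Lemma sum2_mulr0 (I J : finType) (F : I -> J -> T) : \sum_i \sum_j F i j * 0 = 0.
Proof. by rewrite big1 // => i _; rewrite big1 // => j _; rewrite mulr0. Qed.

Lemma sum2_mul0r (I J : finType) (F : I -> J -> T) : \sum_i \sum_j 0 * F i j = 0.
Proof. by rewrite big1 // => i _; rewrite big1 // => j _; rewrite mul0r. Qed.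

Lemma sum2_mulrN (I J : finType) (F G : I -> J -> T) :
  \sum_i \sum_j F i j * - G i j = - \sum_i \sum_j F i j * G i j.
Proof.
by rewrite -sumrN; apply: eq_bigr => i _; rewrite -sumrN; apply: eq_bigr => j _; rewrite mulrN.
Qed.

Lemma sum2_mulNr (I J : finType) (F G : I -> J -> T) :
  \sum_i \sum_j - F i j * G i j = - \sum_i \sum_j F i j * G i j.
Proof.
by rewrite -sumrN; apply: eq_bigr => i _; rewrite -sumrN; apply: eq_bigr => j _; rewrite mulNr.
Qed.

Lemma sum_mcomp_kron (I I' J J' K K' : finType) (A : K -> J -> T) (B : K' -> J' -> T)
    (C : J -> I -> T) (D : J' -> I' -> T) k k' i i' :
  \sum_j \sum_j' A k j * B k' j' * (C j i * D j' i') = mcomp A C k i * mcomp B D k' i'.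
Proof.
rewrite /mcomp mulr_suml; apply: eq_bigr => j _; rewrite mulr_sumr.
by apply: eq_bigr => j' _; rewrite mulrACA.
Qed.

Definition nullhomotopic (M : mf T) (c : T) : Prop :=
  exists (X0 : mf_od M -> mf_ev M -> T) (X1 : mf_ev M -> mf_od M -> T),
    (forall j i, scalmx c j i = mcomp (mf_dO M) X0 j i + mcomp X1 (mf_dE M) j i) /\
    (forall j i, scalmx c j i = mcomp (mf_dE M) X1 j i + mcomp X0 (mf_dO M) j i).

Lemma nullhomotopic0 M : nullhomotopic M 0.
Proof.
exists (fun _ _ => 0), (fun _ _ => 0); split=> j i.
all: by rewrite /scalmx /mcomp !big1 => [|? _|? _]; rewrite ?mulr0 ?mul0r ?addr0 ?if_same.
Qed.

Lemma nullhomotopicD M c d :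
  nullhomotopic M c -> nullhomotopic M d -> nullhomotopic M (c + d).
Proof.
move=> [X0 [X1 [h1 h2]]] [Y0 [Y1 [k1 k2]]].
exists (fun a b => X0 a b + Y0 a b), (fun a b => X1 a b + Y1 a b).
by split=> j i; rewrite scalmxD mcompDr mcompDl ?h1 ?k1 ?h2 ?k2 addrACA.
Qed.

Lemma nullhomotopicMl M r c : nullhomotopic M c -> nullhomotopic M (r * c).
Proof.
move=> [X0 [X1 [h1 h2]]]; exists (fun a b => r * X0 a b), (fun a b => r * X1 a b).
by split=> j i; rewrite scalmxMl mcompMr mcompMl ?h1 ?h2 mulrDr.
Qed.

Lemma nullhomotopicN M c : nullhomotopic M c -> nullhomotopic M (- c).
Proof. by rewrite -mulN1r; apply: nullhomotopicMl. Qed.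

Lemma nullhomotopicB M c d :
  nullhomotopic M c -> nullhomotopic M d -> nullhomotopic M (c - d).
Proof. by move=> hc hd; apply: nullhomotopicD hc (nullhomotopicN hd). Qed.

Lemma nullhomotopic_koszul1_l a b : nullhomotopic (koszul1 a b) a.
Proof.
exists (fun _ _ => 1), (fun _ _ => 0).
by split=> -[] -[]; rewrite /mcomp /= !sum_unit /scalmx /=; ring.
Qed.

Lemma nullhomotopic_koszul1_r a b : nullhomotopic (koszul1 a b) b.
Proof.
exists (fun _ _ => 0), (fun _ _ => 1).
by split=> -[] -[]; rewrite /mcomp /= !sum_unit /scalmx /=; ring.
Qed.

(* Entries of composites of tensor-product maps, evaluated by the mixed-product
   rule [sum_mcomp_kron]. *)
Local Ltac expand_tens_entries :=
  case=> [[? ?]|[? ?]] [[? ?]|[? ?]]; rewrite /= /mcomp /= !big_sumType /= !sum_pair /=;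
  rewrite ?(sum2_mulr0, sum2_mul0r, sum2_mulrN, sum2_mulNr, sum_mcomp_kron);
  rewrite ?mcomp_indl ?mcomp_indr ?scalmx_inl ?scalmx_inr ?scalmx_inlr ?scalmx_inrl.

(* The homotopy X (x) id, with the Koszul sign of id on the odd part. *)
Lemma nullhomotopic_tensl M N c : nullhomotopic M c -> nullhomotopic (tens M N) c.
Proof.
move=> [X0 [X1 [h1 h2]]].
exists (fun (t : tens_od M N) (s : tens_ev M N) => match t, s with
        | inr (a, b), inl (i, j) => X0 a i * ind T b j
        | inl (a, b), inr (i, j) => X1 a i * ind T b j
        | _, _ => 0 end),
       (fun (t : tens_ev M N) (s : tens_od M N) => match t, s with
        | inl (a, b), inr (i, j) => X1 a i * ind T b j
        | inr (a, b), inl (i, j) => X0 a i * ind T b j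
        | _, _ => 0 end).
by split; expand_tens_entries; rewrite ?scalmx_pair ?h1 ?h2; ring.
Qed.

(* The homotopy id (x) Y, with the Koszul sign on the odd part of M. *)
Lemma nullhomotopic_tensr M N c : nullhomotopic N c -> nullhomotopic (tens M N) c.
Proof.
move=> [Y0 [Y1 [h1 h2]]].
exists (fun (t : tens_od M N) (s : tens_ev M N) => match t, s with
        | inl (a, b), inl (i, j) => ind T a i * Y0 b j
        | inr (a, b), inr (i, j) => - (ind T a i * Y1 b j)
        | _, _ => 0 end),
       (fun (t : tens_ev M N) (s : tens_od M N) => match t, s with
        | inl (a, b), inl (i, j) => ind T a i * Y1 b j
        | inr (a, b), inr (i, j) => - (ind T a i * Y0 b j)
        | _, _ => 0 end).
by split; expand_tens_entries; rewrite ?scalmx_pair_ind ?h1 ?h2; ring.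
Qed.

Definition is_scal_mor (M : mf T) (f : mor M M) (c : T) : Prop :=
  (forall j i, morE f j i = scalmx c j i) /\ (forall j i, morO f j i = scalmx c j i).

Lemma is_scal_mor_comp_id_tens (M N N' : mf T) (g : mor N' N) (f : mor N N') c :
  is_scal_mor (mor_comp g f) c -> is_scal_mor (mor_comp (id_tens M g) (id_tens M f)) c.
Proof.
move=> [hE hO]; split; expand_tens_entries.
all: by rewrite ?scalmx_pair_ind -?hE -?hO /= ?addr0 ?add0r.
Qed.

Lemma homotopic_scal (M : mf T) (f : mor M M) c d :
  is_scal_mor f c -> nullhomotopic M (c - d) -> homotopic f (mor_scal M d).
Proof.
move=> [hE hO] [X0 [X1 [h1 h2]]]; exists X0, X1.
have scalmxB j i : scalmx c j i - scalmx d j i = scalmx (c - d) j i :> T.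
  by rewrite /scalmx; case: (j == i); rewrite ?subr0.
by split=> j i; rewrite /= ?hE ?hO scalmxB.
Qed.

End NullHomotopy.

Section BaseChange.
Variables (S T : comNzRingType) (phi : {rmorphism S -> T}).

Lemma scalmx_rmorph (I : finType) c (j i : I) : scalmx (phi c) j i = phi (scalmx c j i).
Proof. by rewrite /scalmx; case: (j == i); rewrite ?rmorph0. Qed.

Lemma mcomp_rmorph (I J K : finType) (g : K -> J -> S) (f : J -> I -> S) k i :
  mcomp (fun k j => phi (g k j)) (fun j i => phi (f j i)) k i = phi (mcomp g f k i).
Proof. by rewrite /mcomp rmorph_sum; apply: eq_bigr => j _; rewrite rmorphM. Qed.

Lemma nullhomotopic_base_change (M : mf S) c :
  nullhomotopic M c -> nullhomotopic (base_change phi M) (phi c).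
Proof.
move=> [X0 [X1 [h1 h2]]].
exists (fun a b => phi (X0 a b)), (fun a b => phi (X1 a b)).
by split=> j i; rewrite scalmx_rmorph ?h1 ?h2 rmorphD -!mcomp_rmorph.
Qed.

Lemma is_scal_mor_comp_base_change (M M' : mf S) (g : mor M' M) (f : mor M M') c :
  is_scal_mor (mor_comp g f) c ->
  is_scal_mor (mor_comp (mor_base_change phi g) (mor_base_change phi f)) (phi c).
Proof.
by move=> [hE hO]; split=> j i; rewrite scalmx_rmorph -?hE -?hO /= -mcomp_rmorph.
Qed.
End BaseChange.

Section SubstitutionModuloIdeal.
Variables (K : comNzRingType) (n : nat) (I : {mpoly K[n]} -> Prop).
Hypothesis I0 : I 0.
Hypothesis ID : forall p q, I p -> I q -> I (p + q).
Hypothesis IMl : forall r p, I p -> I (r * p).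
Variable v : 'I_n -> {mpoly K[n]}.
Hypothesis I_var : forall i, I ('X_i - v i).

Local Notation subst := (mmap (fun c => c%:MP_[n]) v).

Lemma ideal_subrX (p q : {mpoly K[n]}) k : I (p - q) -> I (p ^+ k - q ^+ k).
Proof.
move=> hpq; elim: k => [|k ih]; first by rewrite !expr0 subrr.
have -> : p ^+ k.+1 - q ^+ k.+1 = p * (p ^+ k - q ^+ k) + q ^+ k * (p - q).
  by rewrite !exprS; ring.
by apply: ID; apply: IMl.
Qed.

Lemma ideal_sub_subst_monomial (m : 'X_{1..n}) : I ('X_[m] - mmap1 v m).
Proof.
rewrite mpolyXE_id /mmap1; elim/big_rec2: _ => [|i q p _ ih]; first by rewrite subrr.
have -> : 'X_i ^+ m i * p - v i ^+ m i * q
    = 'X_i ^+ m i * (p - q) + q * ('X_i ^+ m i - v i ^+ m i) by ring.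
by apply: ID; apply: IMl => //; apply: ideal_subrX.
Qed.

Lemma ideal_sub_subst p : I (p - subst p).
Proof.
elim/mpolyind: p => [|c m p _ _ ih]; first by rewrite mmap0 subrr.
rewrite mmapD mmapZ mmapX -mul_mpolyC.
have -> : c%:MP * 'X_[m] + p - (c%:MP_[n] * mmap1 v m + subst p)
    = c%:MP * ('X_[m] - mmap1 v m) + (p - subst p) by ring.
by apply: ID => //; apply: IMl; apply: ideal_sub_subst_monomial.
Qed.

End SubstitutionModuloIdeal.

Section DividedDifferences.
Variable K : idomainType.

(* [ddiff] is [divdiff] over [R]; in general the identity below can be checked in
   the field of fractions. *)
Definition divdiff (a : K) (p : {poly K}) : {poly K} := (p - (p.[a])%:P) %/ ('X - a%:P).

Definition divdiff3 (a b c : K) (p : {poly K}) : {poly K} := divdiff c (divdiff b (divdiff a p)).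

Lemma divdiffP a p : divdiff a p * ('X - a%:P) = p - (p.[a])%:P.
Proof.
rewrite /divdiff; apply/esym/eqP.
rewrite -(@Pdiv.IdomainMonic.dvdp_eq _ _ (monicXsubC a)) dvdp_XsubCl /root.
by rewrite !hornerE subrr.
Qed.

Lemma horner_divdiff a t p : (divdiff a p).[t] * (t - a) = p.[t] - p.[a].
Proof. by rewrite -hornerXsubC -hornerM divdiffP !hornerE. Qed.

Lemma horner_deriv_divdiff a t p :
  ((divdiff a p)^`()).[t] * (t - a) + (divdiff a p).[t] = (p^`()).[t].
Proof.
move: (divdiffP a p); move: (divdiff a p) (p.[a]) => q c e.
rewrite -[p](subrK c%:P) -e derivD derivC addr0 derivM derivXsubC mulr1.
by rewrite hornerD hornerM hornerXsubC.
Qed.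

Lemma horner_divdiff_diag a p : (divdiff a p).[a] = (p^`()).[a].
Proof. by rewrite -(horner_deriv_divdiff a) subrr mulr0 add0r. Qed.

End DividedDifferences.

Lemma map_divdiff (K L : idomainType) (f : {rmorphism K -> L}) a p :
  map_poly f (divdiff a p) = divdiff (f a) (map_poly f p).
Proof.
have divdiff_uniq (b : L) q r : q * ('X - b%:P) = r - (r.[b])%:P -> divdiff b r = q.
  by move=> e; rewrite /divdiff -e (@Pdiv.IdomainMonic.mulpK _ _ (monicXsubC b)).
apply/esym/divdiff_uniq.
by rewrite -map_polyXsubC -rmorphM divdiffP rmorphB /= map_polyC horner_map.
Qed.

Section DividedDifferencesField.
Variable F : fieldType.

Lemma horner_divdiff_neq (a t : F) p : t != a ->
  (divdiff a p).[t] = (p.[t] - p.[a]) / (t - a).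
Proof. by move=> ta; rewrite -horner_divdiff mulfK // subr_eq0. Qed.

Lemma horner_deriv_divdiff_neq (a t : F) p : t != a ->
  ((divdiff a p)^`()).[t] = ((p^`()).[t] - (divdiff a p).[t]) / (t - a).
Proof. by move=> ta; rewrite -(horner_deriv_divdiff a t p) addrK mulfK // subr_eq0. Qed.

Lemma divdiff_odd_pow_identity_field N (a b : F) :
  a != 0 -> b != 0 -> a != b -> a + b != 0 -> (2 : F) != 0 ->
  let p := 'X^(2 * N + 1) in
  b * (a + b) * ((divdiff3 a b a p).[- b] + (divdiff3 a (- a) b p).[- b]
                 + (divdiff3 a (- a) (- b) p).[- b])
  = (2 * N + 1)%:R * (\sum_(i < (2 * N).+1) a ^+ i * b ^+ (2 * N - i))
    - (divdiff (- a) p).[- a].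
Proof.
move=> a0 b0 ab apb two0 p; rewrite /divdiff3.
have hba : - b != a by rewrite eq_sym -subr_eq0 opprK.
have hbb : - b != b by rewrite eq_sym -subr_eq0 opprK -mulr2n -mulr_natr mulf_neq0.
have hbma : - b != - a by rewrite eqr_opp eq_sym.
have hbam : b != - a by rewrite -subr_eq0 opprK addrC.
have haa : - a != a by rewrite eq_sym -subr_eq0 opprK -mulr2n -mulr_natr mulf_neq0.
have ba : b != a by rewrite eq_sym.
(* Expand every divided difference into difference quotients, the confluent ones
   through derivatives, down to values of p and p^`(). *)
rewrite !horner_divdiff_diag (horner_deriv_divdiff_neq _ hbma) (horner_deriv_divdiff_neq _ hba).
rewrite ?(horner_divdiff_neq _ hba, horner_divdiff_neq _ hbb, horner_divdiff_neq _ hbma,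
          horner_divdiff_neq _ hbam, horner_divdiff_neq _ ab, horner_divdiff_neq _ ba,
          horner_divdiff_neq _ haa).
rewrite horner_divdiff_diag /p derivXn addn1 /= !hornerMn !hornerXn.
have -> : \sum_(i < (2 * N).+1) a ^+ i * b ^+ (2 * N - i)
          = (b ^+ (2 * N).+1 - a ^+ (2 * N).+1) / (b - a).
  by rewrite subrXX mulrC mulKf ?subr_eq0 //; apply: eq_bigr => i _; rewrite mulrC.
have even_pow (t : F) : (- t) ^+ (2 * N) = t ^+ (2 * N) by rewrite !exprM sqrrN.
rewrite !exprSr (even_pow a) (even_pow b).
set E := a ^+ (2 * N); set G := b ^+ (2 * N).
by field; rewrite !subr_eq0 ba hbma haa hba hbb hbam.
Qed.

End DividedDifferencesField.

Lemma divdiff_odd_pow_identity (K : idomainType) N (a b : K) :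
  a != 0 -> b != 0 -> a != b -> a + b != 0 -> (2 : K) != 0 ->
  let p := 'X^(2 * N + 1) in
  b * (a + b) * ((divdiff3 a b a p).[- b] + (divdiff3 a (- a) b p).[- b]
                 + (divdiff3 a (- a) (- b) p).[- b])
  = (2 * N + 1)%:R * (\sum_(i < (2 * N).+1) a ^+ i * b ^+ (2 * N - i))
    - (divdiff (- a) p).[- a].
Proof.
move=> a0 b0 ab apb two0 /=.
apply/eqP; rewrite -tofrac_eq; apply/eqP.
set n := (2 * N + 1)%:R.
rewrite !(rmorphM, rmorphD, rmorphN, rmorph_sum) {}/n rmorph_nat.
rewrite -!horner_map /divdiff3 !map_divdiff !rmorphN map_polyXn.
under eq_bigr do rewrite rmorphM !rmorphXn.
apply: divdiff_odd_pow_identity_field; rewrite ?tofrac_eq0 -?rmorphD ?tofrac_eq ?tofrac_eq0 //.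
by rewrite -(rmorph_nat (@tofrac K)) tofrac_eq0.
Qed.

Lemma map_wpoly_rev (f : {rmorphism R -> R}) N xs :
  map_poly f (wpoly_rev N xs) = wpoly_rev N (map f xs).
Proof. by elim: xs => [|x xs ih] /=; [exact: map_polyXn | rewrite -ih; exact: map_divdiff]. Qed.

Lemma rmorph_w (f : {rmorphism R -> R}) N xs : f (w N xs) = w N (map f xs).
Proof.
by rewrite /w -horner_map map_wpoly_rev map_rev map_take size_map -last_map rmorph0.
Qed.

Lemma w_odd_identity N (a b : R) : a != 0 -> b != 0 -> a != b -> a + b != 0 ->
  b * (a + b) * (w N [:: a; b; a; - b] + w N [:: a; - a; b; - b] + w N [:: a; - a; - b; - b])
  = (2 * N + 1)%:R * (\sum_(i < (2 * N).+1) a ^+ i * b ^+ (2 * N - i)) - w N [:: - a; - a].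
Proof.
move=> a0 b0 ab apb; apply: divdiff_odd_pow_identity => //.
by rewrite -(mpolyC_nat _ _ 2) mpolyC_eq0.
Qed.

Ltac m22_entrywise :=
  case=> [[|[|//]] ?] [[|[|//]] ?];
  rewrite /scalmx /mcomp /= !big_ord_recl !big_ord0 /m22 /=; ring.

Lemma nullhomotopic_gamma_par_p_p1 : nullhomotopic gamma_par_p p1.
Proof. by exists (m22 0 0 1 0), (m22 0 0 1 0); split; m22_entrywise. Qed.

Lemma nullhomotopic_gamma_par_p_p2 : nullhomotopic gamma_par_p p2.
Proof. by exists (m22 1 0 0 0), (m22 0 0 0 (-1)); split; m22_entrywise. Qed.

Lemma nullhomotopic_gamma_par_p_P21 : nullhomotopic gamma_par_p (q2 * r2 + q1 * r1 * Cp).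
Proof. by exists (m22 0 1 0 0), (m22 0 1 0 0); split; m22_entrywise. Qed.

Lemma is_scal_mor_saddle : is_scal_mor (mor_comp H_p F_p) (q2 ^+ 2 - q1 ^+ 2 * Cp).
Proof. by split; rewrite /= /saddleE /saddleO; m22_entrywise. Qed.

(* The substitution x3 := -x1, x4 := -x2, y3 := -y1, y4 := -y2. *)
Definition sigma_vals (i : 'I_8) : R :=
  match val i with
  | 2 => - xv 1 | 3 => - xv 2 | 6 => - yv 1 | 7 => - yv 2 | _ => 'X_i
  end.

Definition sigma : R -> R := mmap (fun c => c%:MP_[8]) sigma_vals.
HB.instance Definition _ := GRing.RMorphism.on sigma.
HB.instance Definition _ N :=
  GRing.RMorphism.copy (phi_p N) (mmap (fun c => c%:MP_[8]) (phi_vals N)).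

Lemma val_inord (n k : nat) : (k <= n)%N -> val (inord k : 'I_n.+1) = k.
Proof. exact: inordK. Qed.

Lemma xv12_nondegenerate : [/\ xv 1 != 0, xv 2 != 0, xv 1 != xv 2 & xv 1 + xv 2 != 0].
Proof.
pose v (i : 'I_8) : rat := (val i).+1%:R.
have ev1 : meval v (xv 1) = 1 by rewrite /xv mevalXU /v val_inord.
have ev2 : meval v (xv 2) = 2 by rewrite /xv mevalXU /v val_inord.
have neq0_ev (p : R) : meval v p != 0 -> p != 0 by apply: contra => /eqP ->; rewrite meval0.
by split; [| | rewrite -subr_eq0 |]; apply: neq0_ev; rewrite ?(mevalB, mevalD) ?ev1 ?ev2.
Qed.

Lemma phi_pX N (i : 'I_7) : phi_p N 'X_i = phi_vals N i.
Proof. by rewrite /phi_p mmapX mmap1U. Qed.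

Lemma sigmaX (i : 'I_8) : sigma 'X_i = sigma_vals i.
Proof. by rewrite /sigma mmapX mmap1U. Qed.

Lemma phi_p_P21 N : phi_p N (q2 * r2 + q1 * r1 * Cp)
  = (yv 3 + yv 4) * (yv 1 + yv 4) + (xv 3 + xv 4) * (xv 1 + xv 4) * phi_p N Cp.
Proof. by rewrite rmorphD !rmorphM /= /q1 /q2 /r1 /r2 !phi_pX /phi_vals !val_inord. Qed.

Lemma phi_p_saddle N : phi_p N (q2 ^+ 2 - q1 ^+ 2 * Cp)
  = (yv 3 + yv 4) ^+ 2 - (xv 3 + xv 4) ^+ 2 * phi_p N Cp.
Proof. by rewrite rmorphB rmorphXn rmorphM rmorphXn /= /q1 /q2 !phi_pX /phi_vals !val_inord. Qed.

Lemma sigma_xv1 : sigma (xv 1) = xv 1. Proof. by rewrite /xv sigmaX /sigma_vals val_inord. Qed.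
Lemma sigma_xv2 : sigma (xv 2) = xv 2. Proof. by rewrite /xv sigmaX /sigma_vals val_inord. Qed.
Lemma sigma_xv3 : sigma (xv 3) = - xv 1. Proof. by rewrite {1}/xv sigmaX /sigma_vals val_inord. Qed.
Lemma sigma_xv4 : sigma (xv 4) = - xv 2. Proof. by rewrite {1}/xv sigmaX /sigma_vals val_inord. Qed.
Lemma sigma_yv1 : sigma (yv 1) = yv 1. Proof. by rewrite /yv sigmaX /sigma_vals val_inord. Qed.
Lemma sigma_yv2 : sigma (yv 2) = yv 2. Proof. by rewrite /yv sigmaX /sigma_vals val_inord. Qed.
Lemma sigma_yv3 : sigma (yv 3) = - yv 1. Proof. by rewrite {1}/yv sigmaX /sigma_vals val_inord. Qed.
Lemma sigma_yv4 : sigma (yv 4) = - yv 2. Proof. by rewrite {1}/yv sigmaX /sigma_vals val_inord. Qed.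

Definition sigmaE :=
  (sigma_xv1, sigma_xv2, sigma_xv3, sigma_xv4, sigma_yv1, sigma_yv2, sigma_yv3, sigma_yv4).

Section Concrete.
Variable N : nat.

Local Notation J := (nullhomotopic (gamma_par N)).

Lemma J_xsum : J (xv 1 + xv 2 + xv 3 + xv 4).
Proof. by do 2 apply: nullhomotopic_tensl; apply: nullhomotopic_koszul1_l. Qed.

Lemma J_A_cmn : J (A_cmn N).
Proof. by do 2 apply: nullhomotopic_tensl; apply: nullhomotopic_koszul1_r. Qed.

Lemma J_ysum : J (yv 1 + yv 2 + yv 3 + yv 4).
Proof.
by apply: nullhomotopic_tensl; apply: nullhomotopic_tensr; apply: nullhomotopic_koszul1_l.
Qed.

Lemma J_phi_p c : nullhomotopic gamma_par_p c -> J (phi_p N c).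
Proof. by move=> hc; apply: nullhomotopic_tensr; apply: (nullhomotopic_base_change (phi_p N)). Qed.

Lemma J_sub_sigma p : J (p - sigma p).
Proof.
apply: ideal_sub_subst; [exact: nullhomotopic0 | exact: nullhomotopicD | exact: nullhomotopicMl |].
have J24 : J (xv 2 + xv 4).
  by have := J_phi_p nullhomotopic_gamma_par_p_p1; rewrite /p1 phi_pX /phi_vals val_inord.
have Jy24 : J (yv 2 + yv 4).
  by have := J_phi_p nullhomotopic_gamma_par_p_p2; rewrite /p2 phi_pX /phi_vals val_inord.
have X_inord k (lt_k8 : (k < 8)%N) : 'X_(Ordinal lt_k8) = 'X_(inord k) :> R.
  by rewrite (_ : Ordinal lt_k8 = inord k) //; apply: val_inj; rewrite /= inordK.
case=> [[|[|[|[|[|[|[|[|//]]]]]]]] lt_i8]; rewrite /sigma_vals /= ?subrr;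
  try exact: nullhomotopic0; rewrite X_inord.
- change (J (xv 3 - - xv 1)).
  rewrite (_ : _ - _ = (xv 1 + xv 2 + xv 3 + xv 4) - (xv 2 + xv 4)); last by ring.
  exact: nullhomotopicB J_xsum J24.
- by change (J (xv 4 - - xv 2)); rewrite opprK addrC.
- change (J (yv 3 - - yv 1)).
  rewrite (_ : _ - _ = (yv 1 + yv 2 + yv 3 + yv 4) - (yv 2 + yv 4)); last by ring.
  exact: nullhomotopicB J_ysum Jy24.
- by change (J (yv 4 - - yv 2)); rewrite opprK addrC.
Qed.

Lemma sigma_A_cmn : sigma (A_cmn N) = yv 1 ^+ 2 + w N [:: - xv 1; - xv 1].
Proof.
(* Generalizing [w N] keeps unification from unfolding the divided differences. *)
rewrite /A_cmn; move: (w N) (rmorph_w sigma N) => W sigmaW.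
rewrite !(rmorphD, rmorphB, rmorphM, rmorphN) !sigmaW /= !rmorphN /= !sigmaE.
ring.
Qed.

Lemma J_sigma p : J p -> J (sigma p).
Proof. by move=> Jp; rewrite -[sigma p](subKr p); apply: nullhomotopicB Jp (J_sub_sigma p). Qed.

Lemma sigma_phi_p_C : sigma (phi_p N Cp) =
  w N [:: xv 1; xv 2; xv 1; - xv 2] + w N [:: xv 1; - xv 1; xv 2; - xv 2]
  + w N [:: xv 1; - xv 1; - xv 2; - xv 2].
Proof.
rewrite /Cp phi_pX /phi_vals val_inord //; move: (w N) (rmorph_w sigma N) => W sigmaW.
by rewrite !rmorphD !sigmaW /= !rmorphN /= !sigmaE ?opprK.
Qed.

Definition saddle_target : R :=
  2 * yv 1 * yv 2 - 2 * (2 * N + 1)%:R * \sum_(i < (2 * N).+1) xv 1 ^+ i * xv 2 ^+ (2 * N - i).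

Lemma sigma_saddle_target : sigma saddle_target = saddle_target.
Proof.
rewrite /saddle_target !(rmorphB, rmorphM, rmorph_nat, rmorph_sum) /= !sigmaE.
by under eq_bigr do rewrite rmorphM !rmorphXn /= !sigmaE.
Qed.

Lemma sigma_saddle_identity :
  sigma (phi_p N (q2 ^+ 2 - q1 ^+ 2 * Cp) - saddle_target)
  = 2 * sigma (A_cmn N) + sigma (phi_p N (q2 * r2 + q1 * r1 * Cp)).
Proof.
have [x1_neq0 x2_neq0 x12_neq x12_add_neq0] := xv12_nondegenerate.
move: (w_odd_identity N x1_neq0 x2_neq0 x12_neq x12_add_neq0).
rewrite rmorphB /= sigma_saddle_target sigma_A_cmn phi_p_saddle phi_p_P21.
rewrite !(rmorphD, rmorphB, rmorphN, rmorphM, rmorphXn) /= !sigmaE sigma_phi_p_C /saddle_target.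
move: (w N) (\sum_(i < _) _) => W S /eqP; rewrite -subr_eq0 => /eqP odd_identity.
by apply/eqP; rewrite -subr_eq0 -(mulr0 (-2)) -odd_identity; apply/eqP; ring.
Qed.

End Concrete.

Unset Implicit Arguments.
Set Strict Implicit.
Set Printing Implicit Defensive.

Theorem mainTheorem3 (N : nat) (hN : (1 <= N)%N) :
  homotopic (mor_comp (H_saddle N) (F_saddle N))
    (mor_scal (gamma_par N)
       (2 * yv 1 * yv 2
        - 2 * (2 * N + 1)%:R * \sum_(i < (2 * N).+1) xv 1 ^+ i * xv 2 ^+ (2 * N - i))).
Proof.
apply: (homotopic_scal (c := phi_p N (q2 ^+ 2 - q1 ^+ 2 * Cp))).
  exact/is_scal_mor_comp_id_tens/(is_scal_mor_comp_base_change (phi_p N))/is_scal_mor_saddle.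
rewrite -/(saddle_target N); set d := _ - saddle_target N.
rewrite -(subrK (sigma d) d); apply: nullhomotopicD; first exact: J_sub_sigma.
rewrite /d sigma_saddle_identity; apply: nullhomotopicD; first apply: nullhomotopicMl.
- exact/J_sigma/J_A_cmn.
- exact/J_sigma/J_phi_p/nullhomotopic_gamma_par_p_P21.
Qed.
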